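(* Let $G$ be a connected undirected graph with positive edge weights, weighted adjacency matrix $\mathbf{A}$, diagonal degree matrix $\mathbf{D}$ and Laplacian $\mathbf{L}=\mathbf{D}-\mathbf{A}$. Let $\mathbf{\Pi}=\mathbf{I}-\frac{1}{n}\mathbf{1}\mathbf{1}^\top$ and $\pi=\frac{\mathbf{D}\mathbf{1}}{\mathbf{1}^\top\mathbf{D}\mathbf{1}}$. Then for every vertex $u$, $$\mathbf{L}^+(\mathbf{1_u}-\pi)=\frac12\,\mathbf{\Pi}\mathbf{D}^{-1}\sum_{t=0}^{\infty}\left(\left(\tfrac12\mathbf{I}+\tfrac12\mathbf{A}\mathbf{D}^{-1}\right)^t\mathbf{1_u}-\pi\right).$$
   Context: $\mathbf{L}^+$ denotes the Moore–Penrose pseudoinverse, $\mathbf{1}$ the all-ones vector, $\mathbf{1_u}$ the indicator vector of vertex $u$, and $n$ the number of vertices. *)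

From HB Require Import structures.
From mathcomp Require Import all_boot all_order all_algebra.
From mathcomp Require Import all_classical all_reals all_analysis.
Set Implicit Arguments. Unset Strict Implicit. Unset Printing Implicit Defensive.
Import Order.TTheory GRing.Theory Num.Theory.
Local Open Scope ring_scope.

(* Vertices are 'I_n; a weighted undirected graph is given by its weighted
   adjacency matrix A (symmetric, nonnegative, zero diagonal; A i j > 0 iff ij is an edge). *)

(* Moore-Penrose pseudoinverse conditions (real matrices: conjugate transpose = transpose). *)
Definition is_MP_pinv (R : ringType) (n : nat) (M X : 'M[R]_n) : Prop :=
  [/\ M *m X *m M = M, X *m M *m X = X, (M *m X)^T = M *m X & (X *m M)^T = X *m M].

(* matrix power M^t, valid for every dimension n *)
Definition mxpow (R : ringType) (n : nat) (M : 'M[R]_n) (t : nat) : 'M[R]_n :=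
  iter t (mulmx M) 1%:M.

Definition degmx (R : ringType) (n : nat) (A : 'M[R]_n) : 'M[R]_n :=
  diag_mx (\row_i \sum_j A i j).

Definition ones (R : ringType) (n : nat) : 'cV[R]_n := const_mx 1.

Definition laplacian (R : ringType) (n : nat) (A : 'M[R]_n) : 'M[R]_n := degmx A - A.

Definition statdist (R : fieldType) (n : nat) (A : 'M[R]_n) : 'cV[R]_n :=
  (((ones R n)^T *m degmx A *m ones R n) 0 0)^-1 *: (degmx A *m ones R n).

Definition centering (R : fieldType) (n : nat) : 'M[R]_n :=
  1%:M - (n%:R)^-1 *: (ones R n *m (ones R n)^T).

Definition lazywalk (R : fieldType) (n : nat) (A : 'M[R]_n) : 'M[R]_n :=
  2^-1 *: 1%:M + 2^-1 *: (A *m invmx (degmx A)).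

Definition unitvec (R : ringType) (n : nat) (u : 'I_n) : 'cV[R]_n := delta_mx u 0.

From HB Require Import structures.
From mathcomp Require Import all_boot all_order all_algebra.
From mathcomp Require Import all_classical all_reals all_analysis.
Import Order.TTheory GRing.Theory Num.Theory numFieldNormedType.Exports.
Local Open Scope ring_scope.
Set Implicit Arguments. Unset Strict Implicit. Unset Printing Implicit Defensive.

(* The lazy walk W = (I + A D^-1) / 2 is column-stochastic, fixes pi and has
   a positive diagonal, so by connectivity some power W^K has all entries at
   least some m > 0.  On vectors summing to 0, W^K therefore contracts the
   l1-norm by the factor 1 - n m, hence the l1-norms of the vectors
   W^t (1_u - pi) = W^t 1_u - pi are summable and X = sum_t W^t (1_u - pi)
   exists.  Telescoping gives (I - W) X = 1_u - pi, that is
   L D^-1 X = 2 (1_u - pi).  Finally L^+ L = Pi: by the maximum principle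
   the kernel of L is spanned by 1, and L^+ L is the orthogonal projection
   onto the complement of the kernel. *)

Section MatrixPower.
Variables (R : nzRingType) (n : nat).
Implicit Types M : 'M[R]_n.

Lemma mxpowS M t : mxpow M t.+1 = M *m mxpow M t. Proof. by []. Qed.

Lemma mxpowD M s t : mxpow M (s + t) = mxpow M s *m mxpow M t.
Proof. by elim: s => [|s IH]; rewrite ?mul1mx // addSn !mxpowS IH mulmxA. Qed.

Lemma mxpow_fixed M (v : 'cV[R]_n) t : M *m v = v -> mxpow M t *m v = v.
Proof. by move=> Mv; elim: t => [|t IH]; rewrite ?mul1mx // mxpowS -mulmxA IH. Qed.

Lemma mulmx_1B_sum_mxpow M (z : 'cV[R]_n) N :
  (1%:M - M) *m (\sum_(0 <= t < N) mxpow M t *m z) = z - mxpow M N *m z.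
Proof.
rewrite mulmx_sumr (telescope_sumr_eq (fun t => - (mxpow M t *m z))) //.
  by rewrite opprK mul1mx addrC.
by move=> t _; rewrite mulmxBl mul1mx mxpowS -mulmxA opprK [RHS]addrC.
Qed.

End MatrixPower.

Section ColumnStochastic.
Variables (R : realFieldType) (n : nat).
Implicit Types (M : 'M[R]_n) (z : 'cV[R]_n).

Definition mx_ge0 M := forall i j, 0 <= M i j.

Definition colsum1 M := (ones R n)^T *m M = (ones R n)^T.

Definition norm1 z := \sum_i `|z i 0|.

Lemma mx_ge0_mxpow M t : mx_ge0 M -> mx_ge0 (mxpow M t).
Proof.
move=> M_ge0; elim: t => [|t IH] i j; first by rewrite mxE ler0n.
by rewrite mxpowS mxE sumr_ge0 // => k _; rewrite mulr_ge0.
Qed.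

Lemma colsum1_mxpow M t : colsum1 M -> colsum1 (mxpow M t).
Proof.
by move=> M1; elim: t => [|t IH]; rewrite /colsum1 ?mulmx1 // mxpowS mulmxA M1.
Qed.

Lemma colsum1P M j : colsum1 M -> \sum_i M i j = 1.
Proof.
move=> /matrixP /(_ 0 j); rewrite !mxE => <-.
by apply: eq_bigr => i _; rewrite !mxE mul1r.
Qed.

Lemma sum_mulmx_colsum1 M z : colsum1 M -> \sum_i (M *m z) i 0 = \sum_i z i 0.
Proof.
move=> M1; under eq_bigr do rewrite mxE.
rewrite exchange_big /=; apply: eq_bigr => j _.
by rewrite -mulr_suml colsum1P // mul1r.
Qed.

(* Since z sums to 0, M z = (M - m 1 1^T) z, and the columns of the
   nonnegative matrix M - m 1 1^T have l1-norm 1 - n m. *)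
Lemma norm1_mulmx_le M m z :
  (forall i j, m <= M i j) -> colsum1 M -> \sum_i z i 0 = 0 ->
  norm1 (M *m z) <= (1 - n%:R * m) * norm1 z.
Proof.
move=> m_le M1 z0.
have shiftE i : (M *m z) i 0 = \sum_j (M i j - m) * z j 0.
  by rewrite mxE; under [RHS]eq_bigr do rewrite mulrBl; rewrite sumrB -mulr_sumr z0 mulr0 subr0.
apply: (@le_trans _ _ (\sum_i \sum_j (M i j - m) * `|z j 0|)).
  apply: ler_sum => i _; rewrite shiftE; apply: le_trans (ler_norm_sum _ _ _) _.
  by apply: ler_sum => j _; rewrite normrM ger0_norm // subr_ge0.
rewrite exchange_big mulr_sumr; apply: ler_sum => j _.
by rewrite -mulr_suml sumrB colsum1P // sumr_const card_ord mulr_natl.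
Qed.

End ColumnStochastic.

Section Primitive.
Variables (R : realFieldType) (n : nat) (M : 'M[R]_n).
Hypothesis M_ge0 : mx_ge0 M.
Hypothesis M_diag_gt0 : forall i, 0 < M i i.

Lemma mxpowS_gt0 t i j k :
  0 < M i j -> 0 < mxpow M t j k -> 0 < mxpow M t.+1 i k.
Proof.
move=> Mij Mtjk; rewrite mxpowS mxE (bigD1 j) //= ltr_wpDr ?mulr_gt0 //.
by rewrite sumr_ge0 // => l _; rewrite mulr_ge0 // mx_ge0_mxpow.
Qed.

Lemma mxpow_path_gt0 x p :
  path [rel x y | 0 < M x y] x p -> 0 < mxpow M (size p) x (last x p).
Proof.
elim: p x => [|y p IH] x /=; first by rewrite mxE eqxx ltr01.
by move=> /andP[Mxy /IH]; apply: mxpowS_gt0.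
Qed.

Lemma mxpow_gt0_leq t s i j : (t <= s)%N -> 0 < mxpow M t i j -> 0 < mxpow M s i j.
Proof. by move=> /subnK <-; elim: (s - t)%N => // k IH /IH; apply: mxpowS_gt0. Qed.

Lemma exists_mxpow_gt0 :
  (forall i j, connect [rel x y | 0 < M x y] i j) ->
  exists K, forall i j, 0 < mxpow M K i j.
Proof.
move=> M_conn.
have /fin_all_exists[k k_gt0] (ij : 'I_n * 'I_n) : exists t, 0 < mxpow M t ij.1 ij.2.
  by have /connectP[p /mxpow_path_gt0 ? ->] := M_conn ij.1 ij.2; exists (size p).
exists (\max_ij k ij)%N => i j.
by apply: (mxpow_gt0_leq (leq_bigmax (i, j))); apply: k_gt0.
Qed.

End Primitive.

Lemma mx_gt0_min (R : realFieldType) m n (B : 'M[R]_(m, n)) :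
  (forall i j, 0 < B i j) -> exists2 c, 0 < c & forall i j, c <= B i j.
Proof.
move=> B_gt0; exists (\big[Num.min/1]_(ij : 'I_m * 'I_n) B ij.1 ij.2).
  apply: (big_ind (fun x => 0 < x)) => //.
  by move=> x y x_gt0 y_gt0; rewrite lt_min x_gt0 y_gt0.
by move=> i j; rewrite (bigD1 (i, j)) //= ge_min lexx.
Qed.

Lemma sum_le_of_contraction (R : realFieldType) (f : nat -> R) K d N :
  (forall t, 0 <= f t) -> (forall t, f t.+1 <= f t) ->
  (forall t, f (K + t) <= (1 - d) * f t) -> 0 < d ->
  \sum_(0 <= t < N) f t <= K%:R * f 0 / d.
Proof.
move=> f_ge0 f_decr f_contr d_gt0.
have f_le0 t : f t <= f 0 by elim: t => // t; apply: le_trans.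
set S := \sum_(0 <= t < N) f t.
have S_le : S <= K%:R * f 0 + (1 - d) * S.
  apply: (@le_trans _ _ (\sum_(0 <= t < K + N) f t)).
    by rewrite (big_cat_nat _ (leq_addl K N)) //= lerDl sumr_ge0.
  have shiftE : \sum_(K <= t < K + N) f t = \sum_(0 <= t < N) f (K + t).
    by rewrite -{1}[K]add0n big_addn addKn; apply: eq_bigr => t _; rewrite addnC.
  rewrite (big_cat_nat _ (leq_addr N K)) //= shiftE lerD //.
    apply: le_trans (ler_sum _ (fun t _ => f_le0 t)) _.
    by rewrite sumr_const_nat subn0 mulr_natl.
  by rewrite mulr_sumr ler_sum.
rewrite ler_pdivlMr // mulrC -(lerD2r ((1 - d) * S)).
by rewrite -mulrDl addrC subrK mul1r.
Qed.

Section NeumannSeries.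
Variables (R : realType) (n : nat).
Implicit Types (M : 'M[R]_n) (z : 'cV[R]_n).
Local Open Scope classical_set_scope.

Lemma cvg_series_mxpow M K m z i :
  mx_ge0 M -> colsum1 M -> 0 < m -> (forall i j, m <= mxpow M K i j) ->
  \sum_j z j 0 = 0 -> cvgn (series (fun t => (mxpow M t *m z) i 0)).
Proof.
move=> M_ge0 M1 m_gt0 m_le z0.
pose f t := norm1 (mxpow M t *m z).
have sum0 t : \sum_j (mxpow M t *m z) j 0 = 0.
  by rewrite sum_mulmx_colsum1 //; apply: colsum1_mxpow.
have f_decr t : f t.+1 <= f t.
  have := norm1_mulmx_le M_ge0 M1 (sum0 t).
  by rewrite mulr0 subr0 mul1r /f mxpowS mulmxA.
have f_contr t : f (K + t) <= (1 - n%:R * m) * f t.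
  by rewrite /f mxpowD -mulmxA norm1_mulmx_le //; apply: colsum1_mxpow.
have n_gt0 : (0 < n)%N by case: n i => [[]|].
apply: normed_cvg; apply: nondecreasing_is_cvgn.
  by apply: nondecreasing_series => t _ _; apply: normr_ge0.
have f_ge0 t : 0 <= f t by rewrite sumr_ge0.
have nm_gt0 : 0 < n%:R * m by rewrite mulr_gt0 ?ltr0n.
exists (K%:R * f 0 / (n%:R * m)) => _ [N _ <-].
apply: le_trans (sum_le_of_contraction N f_ge0 f_decr f_contr nm_gt0).
by apply: ler_sum => t _; rewrite /f /norm1 (bigD1 i) //= lerDl sumr_ge0.
Qed.

Definition mxpow_series M z := \col_i limn (series (fun t => (mxpow M t *m z) i 0)).

Lemma mulmx_1B_mxpow_series M z :
  (forall i, cvgn (series (fun t => (mxpow M t *m z) i 0))) ->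
  (1%:M - M) *m mxpow_series M z = z.
Proof.
move=> cvg_z; apply/matrixP => i k; rewrite (ord1 k).
pose lhs N := ((1%:M - M) *m \sum_(0 <= t < N) mxpow M t *m z) i 0.
have lhs_cvg_series : lhs @ \oo --> ((1%:M - M) *m mxpow_series M z) i 0.
  have -> : lhs = fun N => \sum_j (1%:M - M) i j * series (fun t => (mxpow M t *m z) j 0) N.
    by apply/funext => N; rewrite /lhs mxE; apply: eq_bigr => j _; rewrite summxE.
  rewrite mxE; apply: cvg_big => [|j _]; first exact: add_continuous.
  by apply: cvgMl_tmp; rewrite mxE; apply: cvg_z.
have lhs_cvg_z : lhs @ \oo --> z i 0.
  have -> : lhs = fun N => z i 0 - (mxpow M N *m z) i 0.
    by apply/funext => N; rewrite /lhs mulmx_1B_sum_mxpow !mxE.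
  rewrite -[X in _ --> X]subr0; apply: cvgB; first exact: cvg_cst.
  exact: cvg_series_cvg_0.
exact: cvg_unique lhs_cvg_series lhs_cvg_z.
Qed.

End NeumannSeries.

Lemma pinv_mulmx_centering (R : numFieldType) n (M X : 'M[R]_n) :
  M *m ones R n = 0 -> (forall v : 'cV[R]_n, M *m v = 0 -> forall i j, v i 0 = v j 0) ->
  is_MP_pinv M X -> X *m M = centering R n.
Proof.
move=> M1 M_ker [MXM _ _ XM_sym].
set Q := 1%:M - X *m M.
have Q_col i k j : Q i j = Q k j.
  have MQ : M *m col j Q = 0 by rewrite colE mulmxA mulmxBr mulmx1 mulmxA MXM subrr mul0mx.
  by have := M_ker _ MQ i k; rewrite !mxE.
have Q_sym i j : Q i j = Q j i.
  have QT : Q^T = Q by rewrite /Q linearB /= trmx1 XM_sym.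
  by rewrite -{1}QT mxE.
have Q1 : Q *m ones R n = ones R n by rewrite mulmxBl -mulmxA M1 mulmx0 subr0 mul1mx.
apply/matrixP => i j.
have Q_const k : Q i k = Q i i by rewrite Q_sym (Q_col k i).
have rowQ : \sum_k Q i k = 1.
  transitivity ((Q *m ones R n) i 0); last by rewrite Q1 mxE.
  by rewrite [RHS]mxE; apply: eq_bigr => k _; rewrite [ones _ _ _ _]mxE mulr1.
have nQ : n%:R * Q i i = 1.
  rewrite mulr_natl -[n in _ *+ n]card_ord -sumr_const -rowQ.
  by apply: eq_bigr => k _; rewrite Q_const.
have n_neq0 : n%:R != 0 :> R.
  by apply/eqP => n0; move: nQ; rewrite n0 mul0r => /eqP; rewrite eq_sym oner_eq0.
have QE : Q i j = n%:R^-1 by apply: (mulfI n_neq0); rewrite Q_const nQ mulfV.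
have -> : X *m M = 1%:M - Q by rewrite opprB addrC subrK.
by rewrite mxE [(- Q) i j]mxE QE /centering !mxE big_ord1 !mxE !mulr1.
Qed.

Section Laplacian.
Variables (R : realFieldType) (n : nat) (A : 'M[R]_n).

Lemma mul_laplacian (v : 'cV[R]_n) x :
  (laplacian A *m v) x 0 = \sum_j A x j * (v x 0 - v j 0).
Proof.
rewrite mulmxBl [LHS]mxE [X in _ + X]mxE /degmx mul_diag_mx [X in X - _]mxE.
rewrite mxE mulr_suml [X in _ - X]mxE -sumrB.
by apply: eq_bigr => j _; rewrite mulrBr.
Qed.

Lemma laplacian_ones : laplacian A *m ones R n = 0.
Proof.
apply/matrixP => x k; rewrite (ord1 k) mul_laplacian [RHS]mxE big1 // => j _.
by rewrite !mxE subrr mulr0.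
Qed.

Hypothesis A_ge0 : mx_ge0 A.
Hypothesis A_conn : forall i j, connect [rel x y | 0 < A x y] i j.

Lemma laplacian_ker_const (v : 'cV[R]_n) :
  laplacian A *m v = 0 -> forall i j, v i 0 = v j 0.
Proof.
move=> Lv0 i; case: (@arg_maxP _ _ _ i xpredT (fun k => v k 0)) => // m _ m_max.
have max_edge x y : v x 0 = v m 0 -> 0 < A x y -> v y 0 = v m 0.
  move=> vx Axy; have /esym := mul_laplacian v x; rewrite Lv0 mxE vx.
  have terms_ge0 j : true -> 0 <= A x j * (v m 0 - v j 0).
    by move=> _; rewrite mulr_ge0 // subr_ge0; apply: m_max.
  move/(psumr_eq0P terms_ge0)/(_ y isT)/eqP.
  by rewrite mulf_eq0 gt_eqF //= subr_eq0 => /eqP.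
have path_max x p :
    v x 0 = v m 0 -> path [rel x y | 0 < A x y] x p -> v (last x p) 0 = v m 0.
  elim: p x => [|y p IH] x vx //= /andP[Axy y_p].
  exact: IH (max_edge _ _ vx Axy) y_p.
have vE k : v k 0 = v m 0.
  by have /connectP[p m_p ->] := A_conn m k; apply: path_max.
by move=> j; rewrite !vE.
Qed.

End Laplacian.

Section LazyWalk.
Variables (R : realFieldType) (n : nat) (A : 'M[R]_n).
Hypothesis n_ge2 : (2 <= n)%N.
Hypothesis A_sym : A^T = A.
Hypothesis A_ge0 : mx_ge0 A.
Hypothesis A_conn : forall i j, connect [rel x y | 0 < A x y] i j.

Local Notation deg i := (\sum_j A i j).
Local Notation W := (lazywalk A).

Lemma deg_gt0 i : 0 < deg i.
Proof.
have [j neq_ji] : exists j : 'I_n, j != i.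
  have n_gt0 : (0 < n)%N := ltnW n_ge2.
  have [->|] := eqVneq i (Ordinal n_gt0); last by exists (Ordinal n_gt0); rewrite eq_sym.
  by exists (Ordinal n_ge2).
have /connectP[[|y p] /=] := A_conn i j; first by move=> _ ji; rewrite ji eqxx in neq_ji.
move=> /andP[Aiy _] _; rewrite (bigD1 y) //= (lt_le_trans Aiy) // lerDl.
by rewrite sumr_ge0.
Qed.

Lemma mulmx_degmx_inv : degmx A *m diag_mx (\row_i (deg i)^-1) = 1%:M.
Proof.
apply/matrixP => i j; rewrite /degmx mul_diag_mx !mxE.
have [->|_] := eqVneq i j; last by rewrite mulr0n mulr0.
by rewrite !mulr1n mulfV // gt_eqF // deg_gt0.
Qed.

Lemma degmx_unit : degmx A \in unitmx.
Proof. by have [] := mulmx1_unit mulmx_degmx_inv. Qed.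

Lemma invmx_degmx : invmx (degmx A) = diag_mx (\row_i (deg i)^-1).
Proof.
by rewrite -[invmx _]mulmx1 -mulmx_degmx_inv mulmxA mulVmx ?degmx_unit // mul1mx.
Qed.

Lemma lazywalkE i j : W i j = 2^-1 * ((i == j)%:R + A i j / deg j).
Proof. by rewrite /lazywalk invmx_degmx mul_mx_diag !mxE mulrDr. Qed.

Lemma lazywalk_ge0 : mx_ge0 W.
Proof.
move=> i j; rewrite lazywalkE mulr_ge0 ?invr_ge0 ?ler0n ?addr_ge0 ?ler0n //.
by rewrite divr_ge0 // ltW // deg_gt0.
Qed.

Lemma lazywalk_diag_gt0 i : 0 < W i i.
Proof.
rewrite lazywalkE eqxx mulr_gt0 ?invr_gt0 ?ltr0n // ltr_wpDr ?ltr01 //.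
by rewrite divr_ge0 // ltW // deg_gt0.
Qed.

Lemma lazywalk_conn i j : connect [rel x y | 0 < W x y] i j.
Proof.
apply: connect_sub (A_conn i j) => x y /= Axy; apply: connect1.
by rewrite /= lazywalkE mulr_gt0 ?invr_gt0 // ltr_wpDl ?divr_gt0 ?deg_gt0.
Qed.

Lemma colsum1_lazywalk : colsum1 W.
Proof.
apply/matrixP => k j; rewrite !mxE.
under eq_bigr do rewrite lazywalkE !mxE mul1r.
rewrite -mulr_sumr big_split /= (bigD1 j) //= eqxx big1 ?addr0; last by move=> i /negPf->.
have colE : \sum_i A i j = deg j by apply: eq_bigr => i _; rewrite -{1}A_sym mxE.
by rewrite -mulr_suml colE mulfV ?gt_eqF ?deg_gt0 // mulVf // pnatr_eq0.
Qed.

Lemma degmx_onesE i : (degmx A *m ones R n) i 0 = deg i.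
Proof. by rewrite /degmx mul_diag_mx !mxE mulr1. Qed.

Lemma lazywalk_statdist : W *m statdist A = statdist A.
Proof.
rewrite /statdist -scalemxAr; congr (_ *: _).
apply/matrixP => i k; rewrite (ord1 k) mxE degmx_onesE.
have termE j : W i j * deg j = 2^-1 * ((i == j)%:R * deg j + A i j).
  by rewrite lazywalkE -mulrA mulrDl divfK // gt_eqF // deg_gt0.
under eq_bigr do rewrite degmx_onesE termE.
rewrite -mulr_sumr big_split /= (bigD1 i) //= eqxx mul1r.
rewrite [\sum_(j | j != i) _]big1 ?addr0 => [|j]; last first.
  by rewrite eq_sym => /negPf->; rewrite mul0r.
set d := \sum_(j < n) A i j.
by rewrite -mulr2n -(mulr_natl d) mulKf ?pnatr_eq0.
Qed.

Lemma sum_statdist : \sum_i statdist A i 0 = 1.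
Proof.
have sum_deg : ((ones R n)^T *m degmx A *m ones R n) 0 0 = \sum_i deg i.
  by rewrite -mulmxA mxE; apply: eq_bigr => i _; rewrite degmx_onesE !mxE mul1r.
have n_gt0 : (0 < n)%N := ltnW n_ge2.
have sum_deg_gt0 : 0 < \sum_i deg i.
  rewrite (bigD1 (Ordinal n_gt0)) //= ltr_pwDl ?deg_gt0 // sumr_ge0 // => i _.
  exact/ltW/deg_gt0.
rewrite /statdist sum_deg; under eq_bigr do rewrite mxE degmx_onesE.
by rewrite -mulr_sumr mulVf ?gt_eqF.
Qed.

Lemma sum_unitvecB_statdist u : \sum_i (unitvec R u - statdist A) i 0 = 0.
Proof.
under eq_bigr do rewrite mxE [X in _ + X]mxE.
rewrite sumrB sum_statdist (bigD1 u) //= big1 => [|i neq_iu]; last by rewrite mxE (negPf neq_iu).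
by rewrite mxE !eqxx addr0 subrr.
Qed.

Lemma lazywalk_laplacian : 1%:M - W = 2^-1 *: (laplacian A *m invmx (degmx A)).
Proof.
rewrite /laplacian mulmxBl mulmxV ?degmx_unit // scalerBr /lazywalk opprD addrA.
congr (_ - _); rewrite -{1}[1%:M]scale1r -scalerBl; congr (_ *: _).
by rewrite [X in X - _](splitr 1) mul1r addrK.
Qed.

End LazyWalk.

Theorem lemma3p3 (R : realType) (n : nat) (A : 'M[R]_n) (Lp : 'M[R]_n) (u : 'I_n) :
  (2 <= n)%N ->
  A^T = A ->
  (forall i j, 0 <= A i j) ->
  (forall i, A i i = 0) ->
  (forall i j, connect [rel x y | 0 < A x y] i j) ->
  is_MP_pinv (laplacian A) Lp ->
  let term := fun t : nat => mxpow (lazywalk A) t *m unitvec R u - statdist A in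
  (forall i : 'I_n, cvgn (series (fun t => (term t i 0 : R)))) /\
  Lp *m (unitvec R u - statdist A)
  = 2^-1 *: (@centering R n *m invmx (degmx A)
             *m (\col_i limn (series (fun t => (term t i 0 : R))))).
Proof.
move=> n_ge2 A_sym A_ge0 _ A_conn Lp_pinv term.
set W := lazywalk A; set z := unitvec R u - statdist A.
have termE : term = fun t => mxpow W t *m z.
  apply/funext => t.
  by rewrite /term /z mulmxBr (mxpow_fixed _ (lazywalk_statdist n_ge2 A_ge0 A_conn)).
have [K WK_gt0] := exists_mxpow_gt0 (lazywalk_ge0 n_ge2 A_ge0 A_conn)
  (lazywalk_diag_gt0 n_ge2 A_ge0 A_conn) (lazywalk_conn n_ge2 A_ge0 A_conn).
have [m m_gt0 m_le] := mx_gt0_min WK_gt0.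
have z_cvg i : cvgn (series (fun t => (mxpow W t *m z) i 0)).
  apply: cvg_series_mxpow m_gt0 m_le _.
  - exact: lazywalk_ge0.
  - exact: colsum1_lazywalk.
  - exact: sum_unitvecB_statdist.
rewrite termE; split=> //; rewrite -/(mxpow_series W z).
rewrite -{1}(mulmx_1B_mxpow_series z_cvg) lazywalk_laplacian //.
rewrite -scalemxAl -scalemxAr !mulmxA (pinv_mulmx_centering _ _ Lp_pinv) //.
  exact: laplacian_ones.
exact: laplacian_ker_const.
Qed.
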